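(* Under the Physarum dynamics, let $P$ be a path in $G$ from vertex $a$ to vertex $b$, traversed from $a$ to $b$; for each edge $e=(x,y)$ of $P$ in this traversal direction let $\Delta(e)=p_x-p_y$. Let $\Delta(P)=p_a-p_b$, $L(P)=\sum_{e\in P}L_e$ and $W(P)=\sum_{e\in P}L_e\ln D_e$. Then $\dot W(P)=\Delta(P)-L(P)+2\sum_{e\in P:\,\Delta(e)<0}|\Delta(e)|$. If there are real numbers $\bar\Delta$ and $\delta\ge0$ such that for all sufficiently large $t$, $\Delta(P)\le\bar\Delta$ and $\Delta(e)\ge-\delta$ for all $e\in P$, then there is a constant $K$ with $W(P)(t)\le K+(\bar\Delta-L(P)+2n\delta)t$ for all $t\ge0$. If $\Delta(P)\ge\bar\Delta$ for all sufficiently large $t$, then there is a constant $K$ with $W(P)(t)\ge K+(\bar\Delta-L(P))t$ for all $t\ge 0$.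
   Context: Let $G=(N,E)$ be a finite connected undirected graph with $n=|N|$ vertices and two distinct vertices $s_0$ (source) and $s_1$ (sink). Each edge $e$ has a fixed length $L_e>0$. Each edge has a time-dependent diameter $D_e(t)$ with $D_e(0)>0$, and resistance $R_e=L_e/D_e$. At each time $t$, the vertex potentials $p_v$ (normalized by $p_{s_1}=0$) are the solution of $\sum_{u\in\delta(v)}(p_v-p_u)/R_{uv}=b_v$ for all $v$, where $\delta(v)$ is the set of neighbours of $v$, $b_{s_0}=1$, $b_{s_1}=-1$, $b_v=0$ otherwise; for an edge $e=\{u,v\}$ with an arbitrarily fixed orientation $(u,v)$ the current is $Q_e=(p_u-p_v)/R_e=D_e(p_u-p_v)/L_e$. The diameters evolve by $\dot D_e(t)=|Q_e(t)|-D_e(t)$ for all $e\in E$ (the ''Physarum dynamics''). Paths are simple. *)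

From Stdlib Require Import Reals List Lra.
Open Scope R_scope.

Fixpoint sumR (m : nat) (f : nat -> R) : R :=
  match m with O => 0 | S k => sumR k f + f k end.

(* Graph: vertices 0..n-1; edges are the entries of E : list (nat*nat);
   edge i has the (arbitrarily fixed) orientation (src E i, dst E i). *)
Definition src (E : list (nat * nat)) (i : nat) : nat := fst (nth i E (0%nat, 0%nat)).
Definition dst (E : list (nat * nat)) (i : nat) : nat := snd (nth i E (0%nat, 0%nat)).

Definition simple_graph (n : nat) (E : list (nat * nat)) : Prop :=
  (forall i, (i < length E)%nat ->
     (src E i < n)%nat /\ (dst E i < n)%nat /\ src E i <> dst E i) /\
  (forall i j, (i < length E)%nat -> (j < length E)%nat -> i <> j ->
     ~ ((src E i = src E j /\ dst E i = dst E j) \/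
        (src E i = dst E j /\ dst E i = src E j))).

Definition adjacent_by (E : list (nat * nat)) (i u v : nat) : Prop :=
  (src E i = u /\ dst E i = v) \/ (src E i = v /\ dst E i = u).

Inductive connected_in (E : list (nat * nat)) : nat -> nat -> Prop :=
| conn_refl : forall v, connected_in E v v
| conn_step : forall u v w i, (i < length E)%nat -> adjacent_by E i u v ->
    connected_in E v w -> connected_in E u w.

Definition graph_connected (n : nat) (E : list (nat * nat)) : Prop :=
  forall u v, (u < n)%nat -> (v < n)%nat -> connected_in E u v.

Definition supply (s0 s1 v : nat) : R :=
  if Nat.eq_dec v s0 then 1 else if Nat.eq_dec v s1 then -1 else 0.

(* Kirchhoff equations: for every vertex v,
   sum over incident edges {u,v} of (p_v - p_u)/R_uv = b_v, and p_{s1} = 0.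
   cond i = 1/R_i = D_i/L_i. *)
Definition kirchhoff (n : nat) (E : list (nat * nat)) (cond : nat -> R)
    (p : nat -> R) (s0 s1 : nat) : Prop :=
  (forall v, (v < n)%nat ->
     sumR (length E) (fun i =>
       if Nat.eq_dec (src E i) v then cond i * (p v - p (dst E i))
       else if Nat.eq_dec (dst E i) v then cond i * (p v - p (src E i))
       else 0) = supply s0 s1 v) /\
  p s1 = 0.

Definition current (E : list (nat * nat)) (L : nat -> R) (D : nat -> R -> R)
    (p : R -> nat -> R) (t : R) (i : nat) : R :=
  D i t * (p t (src E i) - p t (dst E i)) / L i.

Definition right_cont (f : R -> R) (x : R) : Prop :=
  forall eps, 0 < eps -> exists del, 0 < del /\
    forall y, x <= y < x + del -> Rabs (f y - f x) < eps.

Definition physarum (n : nat) (E : list (nat * nat)) (L : nat -> R)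
    (D : nat -> R -> R) (p : R -> nat -> R) (s0 s1 : nat) : Prop :=
  simple_graph n E /\ graph_connected n E /\
  (s0 < n)%nat /\ (s1 < n)%nat /\ s0 <> s1 /\
  (forall i, (i < length E)%nat -> 0 < L i) /\
  (forall i, (i < length E)%nat -> 0 < D i 0) /\
  (forall i, (i < length E)%nat -> right_cont (D i) 0) /\
  (forall i, (i < length E)%nat -> forall t, 0 < t ->
     derivable_pt_lim (D i) t (Rabs (current E L D p t i) - D i t)) /\
  (forall t, 0 <= t -> kirchhoff n E (fun i => D i t / L i) (p t) s0 s1).

(* A simple path: vertex list vs = [v_0; ...; v_k] (distinct), edge list
   es = [e_0; ...; e_{k-1}] with e_j joining v_j and v_{j+1}; from a to b. *)
Definition is_path (n : nat) (E : list (nat * nat)) (vs es : list nat)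
    (a b : nat) : Prop :=
  length vs = S (length es) /\ NoDup vs /\
  (forall v, In v vs -> (v < n)%nat) /\
  nth 0 vs 0%nat = a /\ last vs 0%nat = b /\
  (forall j, (j < length es)%nat ->
     (nth j es 0 < length E)%nat /\
     adjacent_by E (nth j es 0%nat) (nth j vs 0%nat) (nth (S j) vs 0%nat)).

Definition path_edge_delta (p : R -> nat -> R) (vs : list nat) (t : R) (j : nat) : R :=
  p t (nth j vs 0%nat) - p t (nth (S j) vs 0%nat).

Definition path_length (L : nat -> R) (es : list nat) : R :=
  sumR (length es) (fun j => L (nth j es 0%nat)).

Definition path_W (L : nat -> R) (D : nat -> R -> R) (es : list nat) (t : R) : R :=
  sumR (length es) (fun j => L (nth j es 0%nat) * ln (D (nth j es 0%nat) t)).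

From Stdlib Require Import Reals List Lra Lia.
Open Scope R_scope.

(* Since
   D_j' = |Q_j| - D_j and |Q_j| = D_j |Delta(e_j)| / L_j, each summand has
   derivative |Delta(e_j)| - L_j, and the identity |x| = x + 2 max(-x,0)
   together with the telescoping sum_j Delta(e_j) = Delta(P) gives the formula
   for dW(P)/dt (part 1).  For the two growth bounds we use a general fact:
   a function that is bounded on every compact [0,T'] and whose derivative is
   eventually at most (resp. at least) C grows at most (resp. at least) like
   K + C t, by the mean value theorem.  Local boundedness of W(P) follows from
   the per-edge estimates D(0)/2 e^{-t} <= D(t) <= M on [0,T'], which hold for
   any solution of D' = q - D with q >= 0 (t |-> D(t) e^t is nondecreasing).
   Finally a simple path has at most n edges, so the negative parts sum to at
   most n delta. *)

Lemma sumR_ext m f g : (forall j, (j < m)%nat -> f j = g j) -> sumR m f = sumR m g.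
Proof.
  induction m as [|m IH]; simpl; intros H; auto.
  rewrite IH by (intros; apply H; lia). rewrite H by lia. reflexivity.
Qed.

Lemma sumR_plus m f g : sumR m (fun j => f j + g j) = sumR m f + sumR m g.
Proof. induction m as [|m IH]; simpl; [lra|]. rewrite IH. lra. Qed.

Lemma sumR_minus m f g : sumR m (fun j => f j - g j) = sumR m f - sumR m g.
Proof. induction m as [|m IH]; simpl; [lra|]. rewrite IH. lra. Qed.

Lemma sumR_scal m c f : sumR m (fun j => c * f j) = c * sumR m f.
Proof. induction m as [|m IH]; simpl; [lra|]. rewrite IH. lra. Qed.

Lemma sumR_le m f g : (forall j, (j < m)%nat -> f j <= g j) -> sumR m f <= sumR m g.
Proof.
  induction m as [|m IH]; simpl; intros H; [lra|].
  assert (f m <= g m) by (apply H; lia).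
  assert (sumR m f <= sumR m g) by (apply IH; intros; apply H; lia). lra.
Qed.

Lemma sumR_const m c : sumR m (fun _ => c) = INR m * c.
Proof. induction m as [|m IH]; simpl sumR; [simpl; lra|]. rewrite IH, S_INR. lra. Qed.

Lemma sumR_telescope m (q : nat -> R) : sumR m (fun j => q j - q (S j)) = q O - q m.
Proof. induction m as [|m IH]; simpl; [lra|]. rewrite IH. lra. Qed.

Lemma sumR_deriv m (f : nat -> R -> R) (f' : nat -> R) t :
  (forall j, (j < m)%nat -> derivable_pt_lim (f j) t (f' j)) ->
  derivable_pt_lim (fun s => sumR m (fun j => f j s)) t (sumR m f').
Proof.
  induction m as [|m IH]; simpl; intros H.
  - apply derivable_pt_lim_const.
  - apply (derivable_pt_lim_plus (fun s => sumR m (fun j => f j s)) (f m)).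
    + apply IH; intros; apply H; lia.
    + apply H; lia.
Qed.

Lemma sumR_abs_bounded m (f : nat -> R -> R) (P : R -> Prop) :
  (forall j, (j < m)%nat -> exists M, forall t, P t -> Rabs (f j t) <= M) ->
  exists M, forall t, P t -> Rabs (sumR m (fun j => f j t)) <= M.
Proof.
  induction m as [|m IH]; intros H; simpl.
  - exists 0; intros; rewrite Rabs_R0; lra.
  - destruct IH as [M1 H1]; [intros; apply H; lia|].
    destruct (H m ltac:(lia)) as [M2 H2]. exists (M1 + M2). intros t Pt.
    specialize (H1 t Pt); specialize (H2 t Pt).
    eapply Rle_trans; [apply Rabs_triang | lra].
Qed.

Definition negpart (x : R) : R := if Rlt_dec x 0 then Rabs x else 0.

Lemma abs_as_negpart x : Rabs x = x + 2 * negpart x.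
Proof.
  unfold negpart; destruct (Rlt_dec x 0).
  - rewrite Rabs_left; lra.
  - rewrite Rabs_right; lra.
Qed.

Lemma negpart_nonneg x : 0 <= negpart x.
Proof. unfold negpart; destruct (Rlt_dec x 0); [apply Rabs_pos | lra]. Qed.

Lemma negpart_le x delta : 0 <= delta -> x >= - delta -> negpart x <= delta.
Proof. intros. unfold negpart; destruct (Rlt_dec x 0); [rewrite Rabs_left|]; lra. Qed.

Lemma ln_le_mono x y : 0 < x -> x <= y -> ln x <= ln y.
Proof. intros Hx [H|H]; [left; apply ln_increasing; auto | subst; lra]. Qed.

Section Diameter.
Variables (Di q : R -> R).
Hypothesis Di0_pos : 0 < Di 0.
Hypothesis Di_rcont : right_cont Di 0.
Hypothesis Di_deriv : forall t, 0 < t -> derivable_pt_lim Di t (q t - Di t).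
Hypothesis q_nonneg : forall t, 0 <= q t.

(* (D e^t)' = q e^t >= 0, so D(t) e^t is nondecreasing on t > 0. *)
Lemma diameter_exp_mono s t : 0 < s -> s <= t -> Di s * exp s <= Di t * exp t.
Proof.
  intros Hs [Hst|Hst]; [|subst; lra].
  destruct (MVT_cor2 (fun u => Di u * exp u) (fun u => q u * exp u) s t Hst)
    as [c [Hc1 Hc2]].
  - intros c Hc.
    replace (q c * exp c) with ((q c - Di c) * exp c + Di c * exp c) by ring.
    exact (derivable_pt_lim_mult Di exp c _ _ (Di_deriv c ltac:(lra))
             (derivable_pt_lim_exp c)).
  - assert (0 <= q c * exp c * (t - s)).
    { apply Rmult_le_pos; [apply Rmult_le_pos|]; auto. left; apply exp_pos. lra. }
    lra.
Qed.

(* Comparing with a time s close to 0, where D(s) >= D(0)/2. *)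
Lemma diameter_lower t : 0 <= t -> Di 0 / 2 * exp (- t) <= Di t.
Proof.
  intros [Ht|Ht]; [|subst; rewrite Ropp_0, exp_0; lra].
  destruct (Di_rcont (Di 0 / 2) ltac:(lra)) as [del [Hdel Hd]].
  set (s := Rmin del t / 2).
  assert (Hmin := Rmin_glb_lt del t 0 Hdel Ht).
  assert (Rmin del t <= t) by apply Rmin_r.
  assert (Rmin del t <= del) by apply Rmin_l.
  specialize (Hd s ltac:(unfold s; lra)). apply Rabs_def2 in Hd.
  assert (Hmono := diameter_exp_mono s t ltac:(unfold s; lra) ltac:(unfold s; lra)).
  assert (Hexp_s : 1 <= exp s).
  { rewrite <- exp_0. left. apply exp_increasing. unfold s; lra. }
  assert (Hstep : Di 0 / 2 <= Di t * exp t) by nra.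
  assert (Hinv : exp t * exp (- t) = 1).
  { rewrite <- exp_plus. replace (t + - t) with 0 by ring. apply exp_0. }
  assert (Hpos : 0 < exp (- t)) by apply exp_pos.
  apply Rmult_le_compat_r with (r := exp (- t)) in Hstep; [|lra].
  rewrite Rmult_assoc, Hinv in Hstep. lra.
Qed.

Lemma diameter_pos t : 0 <= t -> 0 < Di t.
Proof.
  intros H. assert (H1 := diameter_lower t H). assert (0 < exp (- t)) by apply exp_pos.
  assert (0 < Di 0 / 2 * exp (- t)) by (apply Rmult_lt_0_compat; lra). lra.
Qed.

(* Near 0 use right continuity, away from 0 continuity on a compact interval. *)
Lemma diameter_upper T : exists M, forall t, 0 <= t <= T -> Di t <= M.
Proof.
  destruct (Di_rcont 1 ltac:(lra)) as [del [Hdel Hd]].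
  destruct (Rle_dec (del / 2) T) as [HT|HT].
  - destruct (continuity_ab_maj Di (del / 2) T HT) as [Mx [HM _]].
    + intros c Hc. apply derivable_continuous_pt.
      exists (q c - Di c). apply Di_deriv. lra.
    + exists (Rmax (Di 0 + 1) (Di Mx)). intros t Ht.
      destruct (Rle_dec (del / 2) t).
      * eapply Rle_trans; [apply HM; lra | apply Rmax_r].
      * specialize (Hd t ltac:(lra)). apply Rabs_def2 in Hd.
        eapply Rle_trans; [|apply Rmax_l]. lra.
  - exists (Di 0 + 1). intros t Ht. specialize (Hd t ltac:(lra)).
    apply Rabs_def2 in Hd. lra.
Qed.

Lemma ln_diameter_bounded T : exists M, forall t, 0 <= t <= T -> Rabs (ln (Di t)) <= M.
Proof.
  destruct (diameter_upper T) as [M HM].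
  exists (Rabs (ln (Rmax M 1)) + Rabs (ln (Di 0 / 2) - T)). intros t Ht.
  assert (HD := diameter_pos t ltac:(lra)).
  assert (Hup : ln (Di t) <= ln (Rmax M 1)).
  { apply ln_le_mono; auto. eapply Rle_trans; [apply HM; auto | apply Rmax_l]. }
  assert (Hlow : ln (Di 0 / 2) - T <= ln (Di t)).
  { assert (Hl := diameter_lower t ltac:(lra)).
    assert (0 < exp (- t)) by apply exp_pos.
    apply ln_le_mono in Hl; [|apply Rmult_lt_0_compat; lra].
    rewrite ln_mult, ln_exp in Hl by lra. lra. }
  apply Rabs_le. split.
  - assert (Rabs (ln (Rmax M 1)) >= 0) by (apply Rle_ge, Rabs_pos).
    assert (- (ln (Di 0 / 2) - T) <= Rabs (ln (Di 0 / 2) - T))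
      by (rewrite <- Rabs_Ropp; apply Rle_abs).
    lra.
  - assert (ln (Rmax M 1) <= Rabs (ln (Rmax M 1))) by apply Rle_abs.
    assert (0 <= Rabs (ln (Di 0 / 2) - T)) by apply Rabs_pos.
    lra.
Qed.
End Diameter.

Lemma eventual_slope_upper (f f' : R -> R) (C T : R) :
  (forall t, 0 < t -> derivable_pt_lim f t (f' t)) ->
  (forall t, T <= t -> f' t <= C) ->
  (forall T', exists M, forall t, 0 <= t <= T' -> Rabs (f t) <= M) ->
  exists K, forall t, 0 <= t -> f t <= K + C * t.
Proof.
  intros Hder Hslope Hbnd.
  set (T1 := Rmax T 1).
  assert (HT1 : T <= T1) by apply Rmax_l. assert (HT1' : 1 <= T1) by apply Rmax_r.
  destruct (Hbnd T1) as [B HB].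
  set (K := Rmax (f T1 - C * T1) (B + Rabs C * T1)).
  assert (HK1 : f T1 - C * T1 <= K) by apply Rmax_l.
  assert (HK2 : B + Rabs C * T1 <= K) by apply Rmax_r.
  exists K. intros t Ht.
  destruct (Rle_dec t T1) as [Hle|Hgt].
  - assert (Hc : - Rabs C * T1 <= C * t).
    { destruct (Rle_dec 0 C); [rewrite Rabs_right | rewrite Rabs_left]; nra. }
    assert (Hf := Rle_abs (f t)). specialize (HB t ltac:(lra)). lra.
  - destruct (MVT_cor2 f f' T1 t ltac:(lra)) as [c [Hmvt Hc]].
    { intros c Hc. apply Hder. lra. }
    assert (f' c * (t - T1) <= C * (t - T1))
      by (apply Rmult_le_compat_r; [lra | apply Hslope; lra]).
    lra.
Qed.

Lemma eventual_slope_lower (f f' : R -> R) (C T : R) :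
  (forall t, 0 < t -> derivable_pt_lim f t (f' t)) ->
  (forall t, T <= t -> C <= f' t) ->
  (forall T', exists M, forall t, 0 <= t <= T' -> Rabs (f t) <= M) ->
  exists K, forall t, 0 <= t -> K + C * t <= f t.
Proof.
  intros Hder Hslope Hbnd.
  destruct (eventual_slope_upper (fun t => - f t) (fun t => - f' t) (- C) T)
    as [K HK].
  - intros t Ht. exact (derivable_pt_lim_opp f t _ (Hder t Ht)).
  - intros t Ht. specialize (Hslope t Ht). lra.
  - intros T'. destruct (Hbnd T') as [M HM]. exists M. intros t Ht.
    rewrite Rabs_Ropp. auto.
  - exists (- K). intros t Ht. specialize (HK t Ht). lra.
Qed.

Lemma physarum_edge n E L D p s0 s1 i :
  physarum n E L D p s0 s1 -> (i < length E)%nat ->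
  0 < L i /\ 0 < D i 0 /\ right_cont (D i) 0 /\
  (forall t, 0 < t -> derivable_pt_lim (D i) t (Rabs (current E L D p t i) - D i t)).
Proof.
  intros (_ & _ & _ & _ & _ & HL & HD0 & Hrc & Hder & _) Hi. auto.
Qed.

Lemma adjacent_abs_drop (x : nat -> R) E i u v :
  adjacent_by E i u v -> Rabs (x (src E i) - x (dst E i)) = Rabs (x u - x v).
Proof.
  intros [[-> ->] | [-> ->]]; [reflexivity | apply Rabs_minus_sym].
Qed.

(* (Le ln D)' = Le (|Q| - D)/D with |Q| = D |dp| / Le, i.e. |dp| - Le. *)
Lemma log_diameter_deriv (Le : R) (Di : R -> R) (dp t : R) :
  0 < Le -> 0 < Di t ->
  derivable_pt_lim Di t (Rabs (Di t * dp / Le) - Di t) ->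
  derivable_pt_lim (fun s => Le * ln (Di s)) t (Rabs dp - Le).
Proof.
  intros HLe HDi Hder.
  assert (Hlog := derivable_pt_lim_comp Di ln t _ _ Hder (derivable_pt_lim_ln _ HDi)).
  replace (Rabs dp - Le) with (Le * (/ Di t * (Rabs (Di t * dp / Le) - Di t))).
  - exact (derivable_pt_lim_scal _ Le t _ Hlog).
  - replace (Di t * dp / Le) with (Di t / Le * dp) by (field; lra).
    rewrite Rabs_mult, (Rabs_right (Di t / Le))
      by (left; apply Rdiv_lt_0_compat; auto).
    field; lra.
Qed.

Lemma last_as_nth (l : list nat) d : last l d = nth (pred (length l)) l d.
Proof.
  induction l as [|x l IH]; simpl; auto. destruct l as [|y l']; simpl; auto.
Qed.

Lemma path_delta_sum n E vs es a b (p : R -> nat -> R) t :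
  is_path n E vs es a b ->
  sumR (length es) (path_edge_delta p vs t) = p t a - p t b.
Proof.
  intros (Hlen & _ & _ & Ha & Hb & _).
  unfold path_edge_delta.
  rewrite (sumR_telescope (length es) (fun j => p t (nth j vs 0%nat))).
  rewrite <- Ha, <- Hb, last_as_nth, Hlen. reflexivity.
Qed.

(* A simple path visits distinct vertices among 0..n-1, so it has < n edges. *)
Lemma path_edges_le n E vs es a b : is_path n E vs es a b -> (length es <= n)%nat.
Proof.
  intros (Hlen & Hnd & Hvn & _).
  assert (length vs <= length (seq 0 n))%nat.
  { apply NoDup_incl_length; auto. intros v Hv. apply in_seq.
    split; [lia | simpl; apply Hvn; auto]. }
  rewrite length_seq in H. lia.
Qed.

Lemma path_W_deriv n E L D p s0 s1 vs es a b t :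
  physarum n E L D p s0 s1 -> is_path n E vs es a b -> 0 < t ->
  derivable_pt_lim (path_W L D es) t
    (sumR (length es) (fun j => Rabs (path_edge_delta p vs t j) - L (nth j es 0%nat))).
Proof.
  intros Hphys (_ & _ & _ & _ & _ & Hadj) Ht.
  apply (sumR_deriv (length es) (fun j s => L (nth j es 0%nat) * ln (D (nth j es 0%nat) s))).
  intros j Hj. destruct (Hadj j Hj) as [He Hej].
  destruct (physarum_edge _ _ _ _ _ _ _ _ Hphys He) as (HL & HD0 & Hrc & Hder).
  assert (HDpos : 0 < D (nth j es 0%nat) t).
  { refine (diameter_pos _ _ HD0 Hrc Hder _ t ltac:(lra)). intros; apply Rabs_pos. }
  unfold path_edge_delta. rewrite <- (adjacent_abs_drop (p t) _ _ _ _ Hej).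
  apply log_diameter_deriv; auto.
Qed.

(* Using |x| = x + 2 negpart(x) and the telescoping sum of the drops. *)
Lemma path_slope_formula n E L (p : R -> nat -> R) vs es a b t :
  is_path n E vs es a b ->
  sumR (length es) (fun j => Rabs (path_edge_delta p vs t j) - L (nth j es 0%nat)) =
  (p t a - p t b) - path_length L es
  + 2 * sumR (length es) (fun j => negpart (path_edge_delta p vs t j)).
Proof.
  intros Hpath.
  rewrite sumR_minus,
    (sumR_ext _ _ (fun j => path_edge_delta p vs t j + 2 * negpart (path_edge_delta p vs t j)))
    by (intros; apply abs_as_negpart).
  rewrite sumR_plus, sumR_scal, (path_delta_sum _ _ _ _ _ _ _ _ Hpath).
  unfold path_length. ring.
Qed.

Lemma path_W_bounded n E L D p s0 s1 vs es a b :
  physarum n E L D p s0 s1 -> is_path n E vs es a b ->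
  forall T, exists M, forall t, 0 <= t <= T -> Rabs (path_W L D es t) <= M.
Proof.
  intros Hphys (_ & _ & _ & _ & _ & Hadj) T.
  apply (sumR_abs_bounded (length es)
           (fun j t => L (nth j es 0%nat) * ln (D (nth j es 0%nat) t))).
  intros j Hj. destruct (Hadj j Hj) as [He _].
  destruct (physarum_edge _ _ _ _ _ _ _ _ Hphys He) as (HL & HD0 & Hrc & Hder).
  destruct (ln_diameter_bounded _ _ HD0 Hrc Hder (fun _ => Rabs_pos _) T) as [M HM].
  exists (L (nth j es 0%nat) * M). intros t Ht.
  rewrite Rabs_mult, (Rabs_right (L _)) by lra.
  apply Rmult_le_compat_l; [lra | auto].
Qed.

Theorem mainTheorem11 (n : nat) (E : list (nat * nat)) (L : nat -> R)
    (D : nat -> R -> R) (p : R -> nat -> R) (s0 s1 : nat)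
    (vs es : list nat) (a b : nat) :
  physarum n E L D p s0 s1 ->
  is_path n E vs es a b ->
  (forall t, 0 < t ->
     derivable_pt_lim (path_W L D es) t
       ((p t a - p t b) - path_length L es
        + 2 * sumR (length es) (fun j =>
            if Rlt_dec (path_edge_delta p vs t j) 0
            then Rabs (path_edge_delta p vs t j) else 0))) /\
  (forall Dbar delta, 0 <= delta ->
     (exists T, forall t, T <= t ->
        p t a - p t b <= Dbar /\
        forall j, (j < length es)%nat -> path_edge_delta p vs t j >= - delta) ->
     exists K, forall t, 0 <= t ->
       path_W L D es t <= K + (Dbar - path_length L es + 2 * INR n * delta) * t) /\
  (forall Dbar,
     (exists T, forall t, T <= t -> p t a - p t b >= Dbar) ->
     exists K, forall t, 0 <= t ->
       path_W L D es t >= K + (Dbar - path_length L es) * t).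
Proof.
  intros Hphys Hpath.
  set (negsum := fun t => sumR (length es) (fun j => negpart (path_edge_delta p vs t j))).
  assert (Hslope : forall t, 0 < t -> derivable_pt_lim (path_W L D es) t
            ((p t a - p t b) - path_length L es + 2 * negsum t)).
  { intros t Ht. unfold negsum. rewrite <- (path_slope_formula n E).
    - exact (path_W_deriv _ _ _ _ _ _ _ _ _ _ _ _ Hphys Hpath Ht).
    - exact Hpath. }
  assert (Hbnd := path_W_bounded _ _ _ _ _ _ _ _ _ _ _ Hphys Hpath).
  split; [exact Hslope | split].
  - intros Dbar delta Hdelta [T HT].
    apply (eventual_slope_upper _ _ _ T Hslope); [|exact Hbnd].
    intros t Ht. destruct (HT t Ht) as [HP Hedges].
    assert (Hneg : negsum t <= INR n * delta).
    { apply Rle_trans with (sumR (length es) (fun _ => delta)).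
      - apply sumR_le. intros j Hj. apply negpart_le; auto.
      - rewrite sumR_const. apply Rmult_le_compat_r; auto.
        apply le_INR, (path_edges_le _ _ _ _ _ _ Hpath). }
    lra.
  - intros Dbar [T HT].
    destruct (eventual_slope_lower _ _ (Dbar - path_length L es) T Hslope)
      as [K HK]; [|exact Hbnd|].
    + intros t Ht. specialize (HT t Ht).
      assert (0 <= negsum t)
        by (rewrite <- (Rmult_0_r (INR (length es))), <- sumR_const;
            apply sumR_le; intros; apply negpart_nonneg).
      lra.
    + exists K. intros t Ht. apply Rle_ge, HK, Ht.
Qed.
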